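(* Let $p\in\mathcal H(2,d)$ and suppose $p(x,y)=a(x)+y\,b(x)$ for polynomials $a,b$ in one variable. Then $N(p)\ge d+1$; the monomial $x^d$ occurs in $p$, and for each $j$ with $0\le j\le d-1$ the monomial $x^jy$ occurs in $p$. Moreover $N(p)=d+1$ if and only if $p(x,y)=x^d+y(x^{d-1}+\cdots+x+1)$.
   Context: $\mathcal H(2,d)$ is the set of real polynomials in $(x,y)$ of total degree exactly $d$, with all coefficients nonnegative, such that $p(x,y)=1$ whenever $x+y=1$. $N(p)$ denotes the number of distinct monomials occurring with nonzero coefficient in $p$. *)

From HB Require Import structures.
From mathcomp Require Import all_boot all_order all_algebra.
From mathcomp Require Import mpoly.
Set Implicit Arguments. Unset Strict Implicit. Unset Printing Implicit Defensive.
Import Order.TTheory GRing.Theory Num.Theory.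
Local Open Scope ring_scope.

Definition mxy (i j : nat) : 'X_{1..2} := [multinom [tuple i; j]].

(* H(2,d): total degree exactly d (msize p = 1 + total degree, and
   msize 0 = 0, so this forces p <> 0), nonnegative coefficients,
   p(x,y) = 1 whenever x + y = 1 *)
Definition inH2 (R : realFieldType) (d : nat) (p : {mpoly R[2]}) : Prop :=
  [/\ msize p = d.+1,
      (forall m, 0 <= p@_m) &
      (forall x y : R, x + y = 1 -> p.@[tnth [tuple x; y]] = 1)].

Definition Nmon (R : realFieldType) (p : {mpoly R[2]}) : nat := size (msupp p).

Definition inX (R : realFieldType) (a : {poly R}) : {mpoly R[2]} :=
  (map_poly (@mpolyC 2 R) a).['X_0].

From HB Require Import structures.
From mathcomp Require Import all_boot all_order all_algebra.
From mathcomp Require Import mpoly.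
Import Order.TTheory GRing.Theory Num.Theory.
Local Open Scope ring_scope.
Set Implicit Arguments. Unset Strict Implicit. Unset Printing Implicit Defensive.

(* On the line x + y = 1 the constraint p = 1 reads a(x) + (1 - x) b(x) = 1,
   i.e. a = c - b with c := 1 + X b, so that a_k = c_k - c_(k+1) where c_0 = 1
   and c_(k+1) = b_k.  Nonnegativity of the a_k makes (c_k) nonincreasing, it
   vanishes beyond d, and total degree d forces c_d > 0.  Hence b_k = c_(k+1) > 0
   for k < d and a_d = c_d > 0: the d + 1 monomials x^d and x^j y occur in p.
   If they are the only ones, then a_k = 0 for k < d, so c_k = 1 for k <= d,
   which determines a and b. *)

Section TelescopingCoefficients.
Variables (R : realFieldType) (d : nat) (a b : {poly R}).
Hypothesis a_def : a = 1 - (1 - 'X) * b.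
Hypothesis coef_a_ge0 : forall k, 0 <= a`_k.
Hypothesis coef_b_high : forall k, (d <= k)%N -> b`_k = 0.

Let c : {poly R} := 1 + b * 'X.

Lemma coef_c_succ k : c`_k.+1 = b`_k.
Proof. by rewrite coefD coef1 coefMX add0r. Qed.

Lemma coef_a_telescope k : a`_k = c`_k - c`_k.+1.
Proof.
have -> : a = c - b by rewrite a_def /c mulrBl mul1r opprB addrA (mulrC 'X).
by rewrite coefB coef_c_succ.
Qed.

Lemma coef_c_antitone k n : (k <= n)%N -> c`_n <= c`_k.
Proof.
move=> le_kn; rewrite -(subnKC le_kn); elim: (n - k)%N => [|m IHm].
  by rewrite addn0.
by apply: le_trans IHm; rewrite addnS -subr_ge0 -coef_a_telescope.
Qed.

Lemma coef_c_high k : (d < k)%N -> c`_k = 0.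
Proof. by case: k => // k; rewrite coef_c_succ ltnS; apply: coef_b_high. Qed.

Lemma extremal_of_coef_a_low :
  (forall k, (k < d)%N -> a`_k = 0) -> a = 'X^d /\ b = \poly_(j < d) 1.
Proof.
move=> coef_a_low.
have coef_c_low k : (k <= d)%N -> c`_k = 1.
  elim: k => [_|k IHk lt_kd]; first by rewrite coefD coef1 coefMX addr0.
  have := coef_a_low k lt_kd; rewrite coef_a_telescope (IHk (ltnW lt_kd)).
  by move/eqP; rewrite subr_eq0 => /eqP.
split; apply/polyP => k.
  rewrite coefXn coef_a_telescope; case: ltngtP => [lt_kd|lt_dk|->].
  - by rewrite !coef_c_low ?subrr // ltnW.
  - by rewrite !coef_c_high ?subrr // ltnW.
  - by rewrite coef_c_low // coef_c_high // subr0.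
rewrite coef_poly -coef_c_succ; case: ltnP => [lt_kd|le_dk].
  exact: coef_c_low.
by rewrite coef_c_high.
Qed.

Hypothesis top_coef_neq0 : a`_d != 0 \/ b`_d.-1 != 0.

Lemma coef_c_top_gt0 : 0 < c`_d.
Proof.
have coef_c_top_ge0 : 0 <= c`_d.
  by have := coef_c_antitone (leqnSn d); rewrite coef_c_high.
rewrite lt_def coef_c_top_ge0 andbT.
case: top_coef_neq0; first by rewrite coef_a_telescope (coef_c_high (ltnSn d)) subr0.
by case: d coef_b_high => [b_0|k _]; rewrite ?b_0 ?eqxx // coef_c_succ.
Qed.

Lemma coef_b_gt0 k : (k < d)%N -> 0 < b`_k.
Proof.
by move=> lt_kd; rewrite -coef_c_succ (lt_le_trans coef_c_top_gt0) ?coef_c_antitone.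
Qed.

Lemma coef_a_top_gt0 : 0 < a`_d.
Proof. by rewrite coef_a_telescope (coef_c_high (ltnSn d)) subr0 coef_c_top_gt0. Qed.

End TelescopingCoefficients.

Lemma mxy0 i j : mxy i j ord0 = i. Proof. by rewrite /mxy multinomE. Qed.
Lemma mxy1 i j : mxy i j ord_max = j. Proof. by rewrite /mxy multinomE. Qed.

Lemma mxyE (m : 'X_{1..2}) : m = mxy (m ord0) (m ord_max).
Proof.
apply/mnmP => -[[|[|//]] lt_i2]; rewrite /mxy multinomE /=;
  by congr (m _); apply: val_inj.
Qed.

Lemma mxy_eq i j i' j' : (mxy i j == mxy i' j') = (i == i') && (j == j').
Proof.
apply/eqP/andP => [E|[/eqP -> /eqP ->] //].
by rewrite -(mxy0 i j) -(mxy1 i j) E mxy0 mxy1.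
Qed.

Lemma mdeg_mxy i j : mdeg (mxy i j) = (i + j)%N.
Proof. by rewrite mdegE big_ord_recl big_ord1 /mxy !multinomE. Qed.

Definition min_supp d : seq 'X_{1..2} := mxy d 0 :: [seq mxy j 1 | j <- iota 0 d].

Lemma size_min_supp d : size (min_supp d) = d.+1.
Proof. by rewrite /= size_map size_iota. Qed.

Lemma mem_min_supp d i j :
  (mxy i j \in min_supp d) = (i == d) && (j == 0)%N || (i < d)%N && (j == 1)%N.
Proof.
rewrite inE mxy_eq; congr (_ || _); apply/mapP/andP => [[k]|[lt_id /eqP ->]].
  by rewrite mem_iota => /andP[_ lt_kd] /eqP; rewrite mxy_eq => /andP[/eqP -> ->].
by exists i; rewrite ?mem_iota.
Qed.

Lemma uniq_min_supp d : uniq (min_supp d).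
Proof.
rewrite /= map_inj_uniq ?iota_uniq ?andbT.
  by apply/mapP => -[j _ /eqP]; rewrite mxy_eq andbF.
by move=> i j /eqP; rewrite mxy_eq eqxx andbT => /eqP.
Qed.

Section InX.
Variable R : realFieldType.
Implicit Types (a b : {poly R}) (s : nat -> R).

Definition affine_y a b : {mpoly R[2]} := inX a + 'X_1 * inX b.

Lemma mpolyX0n i : 'X_0 ^+ i = 'X_[mxy i 0] :> {mpoly R[2]}.
Proof.
rewrite mpolyXn; congr 'X_[_].
by apply/mnmP => -[[|[|//]] lt_i2]; rewrite mulmnE mnm1E /mxy multinomE ?mul1n ?mul0n.
Qed.

Lemma mulX1_mpolyX i : 'X_1 * 'X_[mxy i 0] = 'X_[mxy i 1] :> {mpoly R[2]}.
Proof.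
rewrite -mpolyXD; congr 'X_[_].
by apply/mnmP => -[[|[|//]] lt_i2]; rewrite mnmDE mnm1E /mxy !multinomE.
Qed.

Lemma inX_wide a n : (size a <= n)%N -> inX a = \sum_(i < n) a`_i *: 'X_[mxy i 0].
Proof.
move=> le_an; rewrite /inX (@horner_coef_wide _ n); last by rewrite size_map_poly.
by apply: eq_bigr => i _; rewrite coef_map /= mul_mpolyC mpolyX0n.
Qed.

Lemma mcoeff_sum_mxy s n j0 i j : (i < n)%N ->
  (\sum_(k < n) s k *: 'X_[mxy k j0])@_(mxy i j) = s i *+ (j0 == j).
Proof.
move=> lt_in; rewrite raddf_sum (bigD1 (Ordinal lt_in)) //= big1 ?addr0.
  by rewrite mcoeffZ mcoeffX mxy_eq eqxx mulr_natr.
move=> k; rewrite -val_eqE /= => /negbTE ne_ki.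
by rewrite mcoeffZ mcoeffX mxy_eq ne_ki mulr0.
Qed.

Lemma mcoeff_inX a i j : (inX a)@_(mxy i j) = a`_i *+ (j == 0)%N.
Proof.
rewrite (inX_wide (leq_maxl (size a) i.+1)) mcoeff_sum_mxy ?leq_maxr //.
by rewrite eq_sym.
Qed.

Lemma mcoeff_X1_inX b i j : ('X_1 * inX b)@_(mxy i j) = b`_i *+ (j == 1)%N.
Proof.
rewrite (inX_wide (leq_maxl (size b) i.+1)) mulr_sumr.
under eq_bigr do rewrite -scalerAr mulX1_mpolyX.
by rewrite mcoeff_sum_mxy ?leq_maxr // eq_sym.
Qed.

Lemma meval_inX a (v : 'I_2 -> R) : (inX a).@[v] = a.[v ord0].
Proof.
rewrite (inX_wide (leqnn _)) raddf_sum /= horner_coef; apply: eq_bigr => i _.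
by rewrite mevalZ mevalX big_ord_recl big_ord1 /mxy !multinomE /= expr0 mulr1.
Qed.

Lemma poly_eq0_of_eval0 (q : {poly R}) : (forall x, q.[x] = 0) -> q = 0.
Proof.
move=> q_eval0; apply: (@roots_geq_poly_eq0 _ _ (mkseq (fun i => i%:R) (size q))).
- by apply/allP => x _; apply/rootP.
- by rewrite map_inj_uniq ?iota_uniq // => i j /eqP; rewrite eqr_nat => /eqP.
- by rewrite size_mkseq.
Qed.

Lemma affine_y_line_identity a b :
    (forall x y : R, x + y = 1 -> (affine_y a b).@[tnth [tuple x; y]] = 1) ->
  a = 1 - (1 - 'X) * b.
Proof.
move=> eval_line; apply/eqP; rewrite -subr_eq0; apply/eqP/poly_eq0_of_eval0 => x.
have eval_x : a.[x] + (1 - x) * b.[x] = 1.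
  have := eval_line x (1 - x) (subrKC x 1).
  by rewrite mevalD mevalM mevalXU !meval_inX.
by rewrite !hornerE opprB addrA eval_x subrr.
Qed.

Lemma inX_Xn n : inX 'X^n = 'X_0 ^+ n :> {mpoly R[2]}.
Proof. by rewrite /inX map_polyXn hornerXn. Qed.

Lemma inX_poly1 n : inX (\poly_(j < n) 1) = \sum_(j < n) 'X_0 ^+ j :> {mpoly R[2]}.
Proof.
rewrite /inX poly_def raddf_sum horner_sum; apply: eq_bigr => j _.
by rewrite scale1r /= map_polyXn hornerXn.
Qed.


Lemma mcoeff_affine_y a b i j :
  (affine_y a b)@_(mxy i j) = a`_i *+ (j == 0)%N + b`_i *+ (j == 1)%N.
Proof. by rewrite mcoeffD mcoeff_inX mcoeff_X1_inX. Qed.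

Lemma mcoeff_affine_y0 a b i : (affine_y a b)@_(mxy i 0) = a`_i.
Proof. by rewrite mcoeff_affine_y addr0. Qed.

Lemma mcoeff_affine_y1 a b i : (affine_y a b)@_(mxy i 1) = b`_i.
Proof. by rewrite mcoeff_affine_y add0r. Qed.

Lemma mcoeff_affine_yS2 a b i j : (affine_y a b)@_(mxy i j.+2) = 0.
Proof. by rewrite mcoeff_affine_y addr0. Qed.

Lemma affine_y_coef_high a b d : msize (affine_y a b) = d.+1 ->
  forall k, (d <= k)%N -> b`_k = 0.
Proof.
move=> msize_ab k le_dk; rewrite -(mcoeff_affine_y1 a); apply: memN_msupp_eq0.
by apply: msize_mdeg_ge; rewrite msize_ab mdeg_mxy addn1.
Qed.

Lemma affine_y_top_coef a b d : msize (affine_y a b) = d.+1 ->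
  a`_d != 0 \/ b`_d.-1 != 0.
Proof.
move=> msize_ab; have ab_neq0 : affine_y a b != 0.
  by apply/eqP => ab0; move: msize_ab; rewrite ab0 msize0.
have := mlead_deg ab_neq0; have := mlead_supp ab_neq0.
rewrite msize_ab mcoeff_msupp [mlead _]mxyE mdeg_mxy.
case: (mlead _ ord_max) => [|[|j]] + [deg_lead].
- by rewrite mcoeff_affine_y0 -deg_lead addn0; left.
- by rewrite mcoeff_affine_y1 -deg_lead addn1; right.
- by rewrite mcoeff_affine_yS2 eqxx.
Qed.

Lemma min_supp_sub_affine_y a b d :
    a`_d != 0 -> (forall j, (j < d)%N -> b`_j != 0) ->
  {subset min_supp d <= msupp (affine_y a b)}.
Proof.
move=> ad_neq0 b_low m; rewrite [m]mxyE mem_min_supp mcoeff_msupp.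
case: (m ord_max) => [|[|j]]; rewrite ?andbT ?andbF ?orbF //=.
  by move=> /eqP ->; rewrite mcoeff_affine_y0.
by rewrite mcoeff_affine_y1; apply: b_low.
Qed.

Lemma perm_msupp_extremal d :
  perm_eq (msupp (affine_y 'X^d (\poly_(j < d) 1))) (min_supp d).
Proof.
apply: uniq_perm (msupp_uniq _) (uniq_min_supp d) _ => m.
rewrite [m]mxyE mem_min_supp mcoeff_msupp.
case: (m ord_max) => [|[|j]]; rewrite ?mcoeff_affine_y0 ?mcoeff_affine_y1.
- by rewrite coefXn andbT andbF orbF; case: (m ord0 == d); rewrite ?oner_neq0 ?eqxx.
- by rewrite coef_poly /= andbT andbF; case: (m ord0 < d)%N; rewrite ?oner_neq0 ?eqxx.
- by rewrite mcoeff_affine_yS2 eqxx !andbF.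
Qed.
End InX.

Theorem lemma7 (R : realFieldType) (d : nat) (p : {mpoly R[2]})
    (a b : {poly R}) :
  inH2 d p ->
  p = inX a + 'X_1 * inX b ->
  [/\ (d.+1 <= Nmon p)%N,
      mxy d 0 \in msupp p,
      (forall j : nat, (j < d)%N -> mxy j 1 \in msupp p) &
      (Nmon p = d.+1 <->
         p = 'X_0 ^+ d + 'X_1 * \sum_(j < d) 'X_0 ^+ j)].
Proof.
rewrite -/(affine_y a b) => -[msize_p coef_p_ge0 eval_line] p_def.
rewrite {}p_def in msize_p coef_p_ge0 eval_line *.
have a_def := affine_y_line_identity eval_line.
have coef_a_ge0 k : 0 <= a`_k by rewrite -(mcoeff_affine_y0 _ b).
have coef_b_high := affine_y_coef_high msize_p.
have top_neq0 := affine_y_top_coef msize_p.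
have min_supp_sub : {subset min_supp d <= msupp (affine_y a b)}.
  apply: min_supp_sub_affine_y => [|j lt_jd]; apply: lt0r_neq0.
    exact: (coef_a_top_gt0 a_def coef_a_ge0 coef_b_high top_neq0).
  exact: (coef_b_gt0 a_def coef_a_ge0 coef_b_high top_neq0).
have Nmon_ge : (d.+1 <= Nmon (affine_y a b))%N.
  by rewrite -(size_min_supp d) uniq_leq_size ?uniq_min_supp.
split => //; first exact/min_supp_sub/mem_head.
  by move=> j lt_jd; apply/min_supp_sub; rewrite mem_min_supp lt_jd eqxx orbT.
rewrite -inX_Xn -inX_poly1 -/(affine_y _ _); split => [Nmon_eq|->].
  have supp_eq : min_supp d =i msupp (affine_y a b).
    apply: (uniq_min_size (uniq_min_supp d) min_supp_sub _).2.
    by rewrite size_min_supp -Nmon_eq.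
  have coef_a_low k : (k < d)%N -> a`_k = 0.
    move=> lt_kd; rewrite -(mcoeff_affine_y0 _ b) memN_msupp_eq0 //.
    by rewrite -supp_eq mem_min_supp (ltn_eqF lt_kd) andbF.
  by have [-> ->] := extremal_of_coef_a_low a_def coef_b_high coef_a_low.
by rewrite /Nmon (perm_size (perm_msupp_extremal _ d)) size_min_supp.
Qed.
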